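(* Let $R$ be a Noetherian integral domain of Krull dimension $1$. Then every radical ideal of $R[X]$ is power stable.
   Context: An ideal $I$ of the polynomial ring $R[X]$ over an integral domain $R$ is called power stable if $I^t\cap R = (I\cap R)^t$ for all integers $t\geq 1$. *)

From HB Require Import structures.
From mathcomp Require Import all_boot all_order all_algebra.
Set Implicit Arguments. Unset Strict Implicit. Unset Printing Implicit Defensive.
Import Order.TTheory GRing.Theory Num.Theory.
Local Open Scope ring_scope.

Definition is_ideal (S : comNzRingType) (I : S -> Prop) : Prop :=
  [/\ I 0,
      (forall x y, I x -> I y -> I (x + y)) &
      (forall r x, I x -> I (r * x))].

Definition ideal_mul (S : comNzRingType) (I J : S -> Prop) : S -> Prop :=
  fun x => exists s : seq (S * S),
    (forall p, p \in s -> I p.1 /\ J p.2) /\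
    x = \sum_(p <- s) p.1 * p.2.

Fixpoint ideal_pow (S : comNzRingType) (I : S -> Prop) (t : nat) : S -> Prop :=
  match t with
  | 0%N => fun _ => True
  | t'.+1 => ideal_mul (ideal_pow I t') I
  end.

Definition is_radical (S : comNzRingType) (I : S -> Prop) : Prop :=
  is_ideal I /\ forall f (n : nat), I (f ^+ n) -> I f.

Definition is_prime_ideal (S : comNzRingType) (P : S -> Prop) : Prop :=
  [/\ is_ideal P, ~ P 1 & forall a b, P (a * b) -> P a \/ P b].

Definition noetherian (S : comNzRingType) : Prop :=
  forall F : nat -> S -> Prop,
    (forall n, is_ideal (F n)) ->
    (forall n x, F n x -> F n.+1 x) ->
    exists N, forall n, (N <= n)%N -> forall x, F n x <-> F N x.

Definition prime_chain (S : comNzRingType) (n : nat) (P : nat -> S -> Prop) : Prop :=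
  (forall i, (i <= n)%N -> is_prime_ideal (P i)) /\
  (forall i, (i < n)%N ->
     (forall x, P i x -> P i.+1 x) /\ exists x, P i.+1 x /\ ~ P i x).

Definition krull_dim_eq (S : comNzRingType) (n : nat) : Prop :=
  (exists P : nat -> S -> Prop, prime_chain n P) /\
  (forall m (P : nat -> S -> Prop), (n < m)%N -> ~ prime_chain m P).

Definition contract (R : comNzRingType) (I : {poly R} -> Prop) : R -> Prop :=
  fun r => I r%:P.

Definition power_stable (R : comNzRingType) (I : {poly R} -> Prop) : Prop :=
  forall t : nat, (1 <= t)%N ->
    forall r : R, contract (ideal_pow I t) r <-> ideal_pow (contract I) t r.

(* Let I be a radical ideal of R[X], J = I ∩ R its contraction (again radical),
   and c ∈ R with c ∈ I^t; we must show c ∈ J^t.  If J = 0 then c ∈ J forces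
   c = 0.  Otherwise J is a finite intersection P_1 ∩ ... ∩ P_m of primes
   (Noetherian induction), each containing a nonzero element and hence maximal
   because dim R = 1.  The proof is then local-to-global:
   - Local step.  Fix P = P_i and pick s ∉ P with s·P ⊆ J (prime avoidance
     among maximal ideals).  Modulo P the ideal I is generated by the image
     of a monic polynomial F of positive degree; hence every element of I has
     its remainder modulo F in P[X], every element of I^t has its remainder in
     P^t[X], and for the constant c (its own remainder) this gives c ∈ P^t.
     Consequently s^t·c ∈ J^t with s^t ∉ P.
   - Global step.  The ideal {s | s·c ∈ J^t} is thus contained in no P_i; a
     Chinese-remainder style argument over the finitely many P_i yields c ∈ J^t. *)

From HB Require Import structures.
From mathcomp Require Import all_boot all_order all_algebra zify ring.
From Stdlib Require Import Classical ClassicalEpsilon.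
Set Implicit Arguments. Unset Strict Implicit. Unset Printing Implicit Defensive.
Import GRing.Theory Pdiv.Ring Pdiv.RingMonic.
Local Open Scope ring_scope.

Section IdealArithmetic.
Variable S : comNzRingType.
Implicit Types I J : S -> Prop.

Lemma ideal0 I : is_ideal I -> I 0. Proof. by case. Qed.

Lemma idealD I x y : is_ideal I -> I x -> I y -> I (x + y).
Proof. by case=> _ hD _; apply: hD. Qed.

Lemma idealMl I r x : is_ideal I -> I x -> I (r * x).
Proof. by case=> _ _ hM; apply: hM. Qed.

Lemma idealMr I r x : is_ideal I -> I x -> I (x * r).
Proof. by rewrite mulrC; apply: idealMl. Qed.

Lemma idealN I x : is_ideal I -> I x -> I (- x).
Proof. by rewrite -mulN1r; apply: idealMl. Qed.

Lemma idealB I x y : is_ideal I -> I x -> I y -> I (x - y).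
Proof. by move=> hI hx hy; apply: idealD => //; apply: idealN. Qed.

Lemma ideal_sum I (T : Type) (r : seq T) (P : pred T) (F : T -> S) :
  is_ideal I -> (forall i, P i -> I (F i)) -> I (\sum_(i <- r | P i) F i).
Proof. by move=> hI hF; apply: (big_ind I) => //; [exact: ideal0 | move=> *; exact: idealD]. Qed.

Lemma ideal_mul_ideal I J : is_ideal I -> is_ideal (ideal_mul I J).
Proof.
move=> hI; split.
- by exists [::]; rewrite big_nil.
- move=> _ _ [s [hs ->]] [s' [hs' ->]]; exists (s ++ s'); rewrite big_cat; split=> //.
  by move=> p; rewrite mem_cat => /orP[]; [apply: hs | apply: hs'].
- move=> r _ [s [hs ->]]; exists [seq (r * p.1, p.2) | p <- s]; split.
  + by move=> _ /mapP[p /hs[h1 h2] ->]; split=> //; apply: idealMl.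
  + by rewrite big_map mulr_sumr; apply: eq_bigr => p _; rewrite mulrA.
Qed.

Lemma ideal_pow_ideal I n : is_ideal (ideal_pow I n).
Proof. by elim: n => [|n IH] /=; [split | apply: ideal_mul_ideal]. Qed.

Lemma ideal_mul_in I J x y : I x -> J y -> ideal_mul I J (x * y).
Proof.
by move=> hx hy; exists [:: (x, y)]; rewrite big_seq1; split=> // p /[!inE] /eqP ->.
Qed.

Lemma ideal_mul_subr I J x : is_ideal J -> ideal_mul I J x -> J x.
Proof.
move=> hJ [s [hs ->]]; rewrite big_seq; apply: ideal_sum => // p /hs[_ hp].
exact: idealMl.
Qed.

Lemma ideal_pow_subr I t x : is_ideal I -> (0 < t)%N -> ideal_pow I t x -> I x.
Proof. by case: t => // t hI _ /= hx; apply: ideal_mul_subr hI hx. Qed.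

Lemma ideal_pow_expr I x n : I x -> ideal_pow I n (x ^+ n).
Proof. by move=> hx; elim: n => [|n IH] //=; rewrite exprSr; apply: ideal_mul_in. Qed.

End IdealArithmetic.

Section PrincipalExtension.
Variable S : comNzRingType.
Implicit Types (J : S -> Prop) (a x : S).

Definition add_principal J a : S -> Prop := fun x => exists m r, J m /\ x = m + r * a.

Definition radical_of J : S -> Prop := fun x => exists n, J (x ^+ n).

Lemma add_principal_ideal J a : is_ideal J -> is_ideal (add_principal J a).
Proof.
move=> hJ; split.
- by exists 0, 0; split; [exact: ideal0 | rewrite mul0r addr0].
- move=> _ _ [m [r [hm ->]]] [m' [r' [hm' ->]]]; exists (m + m'), (r + r').
  by split; [exact: idealD | rewrite mulrDl addrACA].
- move=> s _ [m [r [hm ->]]]; exists (s * m), (s * r).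
  by split; [exact: idealMl | rewrite mulrDr mulrA].
Qed.

Lemma add_principal_sub J a x : is_ideal J -> J x -> add_principal J a x.
Proof. by exists x, 0; rewrite mul0r addr0. Qed.

Lemma add_principal_gen J a : is_ideal J -> add_principal J a a.
Proof. by exists 0, 1; rewrite mul1r add0r; split=> //; apply: ideal0. Qed.

Lemma radical_of_sub J x : J x -> radical_of J x.
Proof. by exists 1%N; rewrite expr1. Qed.

Lemma radical_of_radical J : is_ideal J -> is_radical (radical_of J).
Proof.
move=> hJ; split; last by move=> f n [k hk]; exists (n * k)%N; rewrite exprM.
split.
- by exists 1%N; rewrite expr1; exact: ideal0.
- move=> x y [n hn] [m hm]; exists (n + m)%N; rewrite exprDn.
  apply: ideal_sum => // i _; rewrite -mulr_natr; apply: idealMr => //.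
  case: (leqP m i) => hi.
    by rewrite -(subnK hi) exprD mulrA; apply: idealMl.
  have hni : (n <= n + m - i)%N by lia.
  by rewrite -(subnK hni) exprD mulrAC; apply: idealMl.
- by move=> r x [n hn]; exists n; rewrite exprMn; apply: idealMl.
Qed.

Lemma radical_split M a b x : is_radical M -> M (a * b) ->
  radical_of (add_principal M a) x -> radical_of (add_principal M b) x -> M x.
Proof.
move=> [hM hMr] hab [n [m [r [hm ea]]]] [k [m' [r' [hm' eb]]]].
apply: (hMr x (n + k)%N); rewrite exprD ea eb mulrDl !mulrDr.
apply: (idealD hM (idealD hM (idealMr _ hM hm) (idealMr _ hM hm))).
apply: (idealD hM (idealMl _ hM hm')).
by rewrite mulrACA; apply: idealMl.
Qed.

End PrincipalExtension.

Definition prime_decomposition (S : comNzRingType) (J : S -> Prop)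
    (L : seq (S -> Prop)) : Prop :=
  (forall P, List.In P L -> is_prime_ideal P) /\
  forall x, J x <-> (forall P, List.In P L -> P x).

Section Noetherian.
Variable S : comNzRingType.
Hypothesis hN : noetherian S.
Implicit Types (J M P : S -> Prop) (a b u x : S).

(* Every nonempty family of ideals has a maximal member: otherwise dependent
   choice would build a strictly ascending chain. *)
Lemma noetherian_maximal (Q : (S -> Prop) -> Prop) J0 : is_ideal J0 -> Q J0 ->
  exists M, [/\ is_ideal M, Q M &
    forall M', is_ideal M' -> Q M' -> (forall x, M x -> M' x) -> forall x, M' x -> M x].
Proof.
move=> hJ0 hQ0; apply: NNPP => hno.
pose T := {M : S -> Prop | is_ideal M /\ Q M}.
have step (M : T) : {M' : T | (forall x, sval M x -> sval M' x) /\
                              exists x, sval M' x /\ ~ sval M x}.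
  case: M => M [hM hQ]; apply: constructive_indefinite_description.
  apply: NNPP => hstuck; apply: hno; exists M; split=> // M' hM' hQ' hsub x hx.
  apply: NNPP => hnx; apply: hstuck; exists (exist _ M' (conj hM' hQ')).
  by split=> //; exists x.
pose chain n := iter n (fun C : T => sval (step C)) (exist _ J0 (conj hJ0 hQ0) : T).
have [N hNst] := hN (F := fun n => sval (chain n))
  (fun n => proj1 (svalP (chain n))) (fun n => proj1 (svalP (step (chain n)))).
have [x [hx hnx]] := proj2 (svalP (step (chain N))).
by apply: hnx; apply/(hNst N.+1 (leqnSn N)).
Qed.

(* Every radical ideal is a finite intersection of primes: a maximal
   counterexample M is proper and not prime, and splits by radical_split. *)
Lemma radical_prime_decomposition J : is_radical J -> exists L, prime_decomposition J L.
Proof.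
move=> hJ; apply: NNPP => hno.
have [M [hM [[_ hMr] hMd] hMmax]] :=
  @noetherian_maximal (fun M => is_radical M /\ ~ exists L, prime_decomposition M L)
    J (proj1 hJ) (conj hJ hno).
case: (classic (M 1)) => hM1.
  apply: hMd; exists [::]; split=> // x; split=> // _.
  by rewrite -(mulr1 x); apply: idealMl.
case: (classic (is_prime_ideal M)) => hMp.
  apply: hMd; exists [:: M]; split; first by move=> P [<-|].
  by move=> x; split; [move=> hx P [<-|] | move=> h; apply: h; left].
have [a [b [hab [ha hb]]]] : exists a b, M (a * b) /\ ~ M a /\ ~ M b.
  apply: NNPP => hno2; apply: hMp; split=> // a b hab; apply: NNPP => hn.
  by apply: hno2; exists a, b; split=> //; split=> h; apply: hn; [left | right].
have hdec c : ~ M c -> exists L, prime_decomposition (radical_of (add_principal M c)) L.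
  move=> hc; apply: NNPP => hnd; apply: hc.
  have hrad := radical_of_radical (add_principal_ideal c hM).
  have hsub x : M x -> radical_of (add_principal M c) x.
    by move=> hx; apply/radical_of_sub/add_principal_sub.
  apply: (hMmax _ (proj1 hrad) (conj hrad hnd) hsub).
  exact/radical_of_sub/add_principal_gen.
have [[La [hLa eLa]] [Lb [hLb eLb]]] := (hdec a ha, hdec b hb).
apply: hMd; exists (La ++ Lb); split.
  by move=> P /List.in_app_iff[]; [apply: hLa | apply: hLb].
move=> x; split=> [hx P /List.in_app_iff[] hP|hx].
- by apply: (proj1 (eLa x)) P hP; apply/radical_of_sub/add_principal_sub.
- by apply: (proj1 (eLb x)) P hP; apply/radical_of_sub/add_principal_sub.
apply: (radical_split (conj hM hMr) hab).
- by apply/eLa => P hP; apply: hx; apply/List.in_app_iff; left.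
- by apply/eLb => P hP; apply: hx; apply/List.in_app_iff; right.
Qed.

Lemma maximal_proper_prime M : is_ideal M -> ~ M 1 ->
  (forall M', is_ideal M' -> ~ M' 1 -> (forall x, M x -> M' x) -> forall x, M' x -> M x) ->
  is_prime_ideal M.
Proof.
move=> hM hM1 hmax; split=> // a b hab; case: (classic (M a)) => ha; [by left | right].
have [m [r [hm e1]]] : add_principal M a 1.
  apply: NNPP => hn1; apply: ha; apply: (hmax _ (add_principal_ideal a hM) hn1).
    by move=> x; apply: add_principal_sub.
  exact: add_principal_gen.
have -> : b = m * b + r * (a * b) by rewrite mulrA -mulrDl -e1 mul1r.
exact: idealD hM (idealMr _ hM hm) (idealMl _ hM hab).
Qed.

Lemma proper_in_prime_above P u : is_ideal P -> ~ add_principal P u 1 ->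
  exists M, [/\ is_prime_ideal M, forall x, P x -> M x & M u].
Proof.
move=> hP hPu.
have [M [hM [hPuM hM1] hMmax]] := noetherian_maximal
  (Q := fun M => (forall x, add_principal P u x -> M x) /\ ~ M 1)
  (add_principal_ideal u hP) (conj (fun x h => h) hPu).
exists M; split.
- apply: maximal_proper_prime => // M' hM' hM'1 hMM'.
  by apply: hMmax => //; split=> // x /hPuM /hMM'.
- by move=> x hx; apply/hPuM/add_principal_sub.
- exact/hPuM/add_principal_gen.
Qed.

End Noetherian.

(* Every element outside P is invertible modulo P, i.e. S/P is a field when
   P is proper. *)
Definition residue_field (S : comNzRingType) (P : S -> Prop) : Prop :=
  forall u, ~ P u -> exists v, P (1 - u * v).

Section DimensionOne.
Variable S : idomainType.
Hypotheses (hN : noetherian S) (hK : krull_dim_eq S 1).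

Lemma zero_prime_ideal : is_prime_ideal (fun x : S => x = 0).
Proof.
split.
- by split=> // [x y -> ->|r x ->]; rewrite ?addr0 ?mulr0.
- by move/eqP; rewrite oner_eq0.
- by move=> a b /eqP; rewrite mulf_eq0 => /orP[] /eqP; [left | right].
Qed.

(* A nonzero prime is maximal: a prime strictly above it would give the chain
   0 ⊊ P ⊊ M of length 2. *)
Lemma nonzero_prime_residue_field (P : S -> Prop) x0 :
  is_prime_ideal P -> P x0 -> x0 != 0 -> residue_field P.
Proof.
move=> hP hx0 hx0n u hu; have [hPi _ _] := hP.
case: (classic (add_principal P u 1)) => [[m [r [hm e]]]|hPu].
  by exists r; rewrite e mulrC addrK.
have [M [hM hPM hMu]] := proper_in_prime_above hN hPi hPu.
pose chain i := if i == 0%N then (fun x : S => x = 0) else if i == 1%N then P else M.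
exfalso; apply: (hK.2 2%N chain) => //; split.
  by case=> [|[|[|i]]] //= _; exact: zero_prime_ideal.
case=> [|[|i]] //= _; split.
- by move=> x ->; exact: ideal0.
- by exists x0; split=> // e; rewrite e eqxx in hx0n.
- exact: hPM.
- by exists u.
Qed.

End DimensionOne.

Section CoefficientIdeals.
Variable R : comNzRingType.
Implicit Types (Q : R -> Prop) (p q : {poly R}).

Definition coef_in Q p : Prop := forall i, Q p`_i.

Lemma coef_in_ideal Q : is_ideal Q -> is_ideal (coef_in Q).
Proof.
move=> hQ; split.
- by move=> i; rewrite coef0; apply: ideal0.
- by move=> p q hp hq i; rewrite coefD; apply: idealD.
- by move=> r p hp i; rewrite coefM; apply: ideal_sum => // j _; apply: idealMl.
Qed.

Lemma coef_in_mul (I J : R -> Prop) p q : is_ideal (ideal_mul I J) ->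
  coef_in I p -> coef_in J q -> coef_in (ideal_mul I J) (p * q).
Proof. by move=> hIJ hp hq i; rewrite coefM; apply: ideal_sum => // j _; apply: ideal_mul_in. Qed.

Lemma coef_in_poly_ideal (I : {poly R} -> Prop) Q g : is_ideal I ->
  (forall x, Q x -> I x%:P) -> coef_in Q g -> I g.
Proof.
move=> hI hQ hg; rewrite -[g]coefK poly_def; apply: ideal_sum => // i _.
by rewrite -mul_polyC; apply: idealMr => //; apply: hQ.
Qed.

(* Reduction modulo a monic polynomial is R-linear, so it preserves Q[X]. *)
Lemma coef_in_rmodp Q F p : F \is monic -> is_ideal Q ->
  coef_in Q p -> coef_in Q (rmodp p F).
Proof.
move=> monF hQ hp i; rewrite -[p]coefK poly_def rmodp_sum // coef_sum.
by apply: ideal_sum => // j _; rewrite rmodpZ // coefZ; apply: idealMr.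
Qed.

Section MonicFiltration.
Variables (P : R -> Prop) (F : {poly R}).
Hypothesis monF : F \is monic.

Definition mod_pow_coef (t : nat) (g : {poly R}) : Prop :=
  coef_in (ideal_pow P t) (rmodp g F).

Lemma mod_pow_coef_ideal t : is_ideal (mod_pow_coef t).
Proof.
have hPt := coef_in_ideal (ideal_pow_ideal P t); split.
- by rewrite /mod_pow_coef rmod0p; exact: ideal0 hPt.
- by move=> g h hg hh; rewrite /mod_pow_coef rmodpD //; exact: idealD hPt hg hh.
- move=> r g hg; rewrite /mod_pow_coef -rmodp_mulmr //.
  exact: coef_in_rmodp (ideal_pow_ideal P t) (idealMl _ hPt hg).
Qed.

(* The conditions are multiplicative: rmodp (g h) = rmodp (rmodp g * rmodp h). *)
Lemma mod_pow_coefM t g h : mod_pow_coef t g -> coef_in P (rmodp h F) ->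
  mod_pow_coef t.+1 (g * h).
Proof.
move=> hg hh; rewrite /mod_pow_coef -rmodp_mulmr // -rmodp_mulml //.
apply: coef_in_rmodp => //; first exact: (ideal_pow_ideal P t.+1).
exact: coef_in_mul (ideal_pow_ideal P t.+1) hg hh.
Qed.

Lemma ideal_pow_mod_pow_coef (I : {poly R} -> Prop) :
  (forall g, I g -> coef_in P (rmodp g F)) ->
  forall t g, ideal_pow I t g -> mod_pow_coef t g.
Proof.
move=> hIP; elim=> [|t IH] g /=; first by [].
move=> [s [hs ->]]; rewrite big_seq; apply: ideal_sum; first exact: mod_pow_coef_ideal.
by move=> p /hs[h1 h2]; apply: mod_pow_coefM; [apply: IH | apply: hIP].
Qed.

(* A constant is its own remainder modulo F as soon as deg F > 0. *)
Lemma mod_pow_coefC t c : (1 < size F)%N -> mod_pow_coef t c%:P -> ideal_pow P t c.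
Proof.
move=> hF; rewrite /mod_pow_coef rmodp_small => [/(_ 0%N)|]; first by rewrite coefC.
exact: leq_ltn_trans (size_polyC_leq1 c) hF.
Qed.

End MonicFiltration.
End CoefficientIdeals.

Lemma ex_minimal (Pn : nat -> Prop) n :
  Pn n -> exists m, Pn m /\ forall k, Pn k -> (m <= k)%N.
Proof.
elim: n {-2}n (leqnn n) => [|N IH] n hn hPn.
  by exists n; split=> // k _; move: hn; rewrite leqn0 => /eqP ->.
case: (classic (exists k, Pn k /\ (k < n)%N)) => [[k [hk hkn]]|hno].
  by apply: (IH k) => //; lia.
exists n; split=> // k hk; rewrite leqNgt; apply/negP => hkn; apply: hno; eauto.
Qed.

Section DegreeModulo.
Variables (R : comNzRingType) (P : R -> Prop).
Hypothesis hP : is_ideal P.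

Definition deg_mod (p : {poly R}) (n : nat) : Prop :=
  ~ P p`_n /\ forall i, (n < i)%N -> P p`_i.

Lemma deg_mod_exists p : ~ coef_in P p -> exists n, deg_mod p n.
Proof.
move=> hp.
have [|n [hn hmin]] := @ex_minimal (fun n => forall i, (n < i)%N -> P p`_i) (size p).
  by move=> i hi; rewrite nth_default ?(ltnW hi) //; apply: ideal0.
exists n; split=> // hPn; case: n hn hPn hmin => [|n] hn hPn hmin.
  by apply: hp => -[|i] //; apply: hn.
have /hmin : forall i, (n < i)%N -> P p`_i by move=> i; rewrite leq_eqVlt => /orP[/eqP <-|/hn].
by rewrite ltnn.
Qed.

Lemma deg_mod_le p n m : deg_mod p n -> (forall i, (m < i)%N -> P p`_i) -> (n <= m)%N.
Proof. by move=> [hn _] hm; rewrite leqNgt; apply/negP => /hm. Qed.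

Lemma monic_associate (f : {poly R}) n v : deg_mod f n -> P (1 - f`_n * v) ->
  exists F : {poly R}, [/\ F \is monic, size F = n.+1 & coef_in P (F - v%:P * f)].
Proof.
move=> [_ hf] hv; pose F := 'X^n + \poly_(i < n) (v * f`_i).
have hsF : size F = n.+1.
  by rewrite size_polyDl size_polyXn //; apply: leq_ltn_trans (size_poly _ _) _.
exists F; split=> //.
  by apply/monicP; rewrite lead_coefE hsF coefD coefXn coef_poly eqxx ltnn addr0.
move=> i; rewrite coefB coefD coefXn coef_poly coefCM.
case: ltngtP => hin; rewrite /= ?add0r ?addr0 ?sub0r.
- by rewrite subrr; apply: ideal0.
- by apply: idealN => //; apply: idealMl => //; exact: hf.
- by rewrite hin mulrC.
Qed.

End DegreeModulo.

(* Modulo a maximal ideal P, an ideal I of R[X] becomes an ideal of the PID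
   (R/P)[X]; it is generated by the reduction of a monic F, which has positive
   degree when I contains no polynomial reducing to a nonzero constant. *)
Section MonicGenerator.
Variables (R : comNzRingType) (I : {poly R} -> Prop) (P : R -> Prop).
Hypotheses (hI : is_ideal I) (hP : is_ideal P) (hPres : residue_field P).
Hypothesis hIconst : forall g, I g -> (forall i, (0 < i)%N -> P g`_i) -> P g`_0.

Lemma monic_generator : exists F : {poly R},
  [/\ F \is monic, (1 < size F)%N & forall g, I g -> coef_in P (rmodp g F)].
Proof.
case: (classic (exists g, I g /\ ~ coef_in P g)) => [[g0 [hIg0 hg0]]|hIP]; last first.
  exists 'X; rewrite monicX size_polyX; split=> // g hg.
  apply: coef_in_rmodp (monicX _) hP _; by apply: NNPP => hng; apply: hIP; exists g.
have [n0 hn0] := deg_mod_exists hP hg0.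
have [n [[f [hf hfn]] hmin]] :=
  @ex_minimal (fun n => exists f, I f /\ deg_mod P f n) n0 (ex_intro _ g0 (conj hIg0 hn0)).
have hn_gt0 : (0 < n)%N.
  case: n hfn {hmin} => // -[hf0 hfi]; exfalso; apply: hf0; exact: hIconst hf hfi.
have [v hv] := hPres (proj1 hfn).
have [F [monF hsF hFf]] := monic_associate hP hfn hv.
exists F; split=> //; first by rewrite hsF.
(* A remainder outside P[X] would give an element of I of smaller degree mod P. *)
move=> g hg; apply: NNPP => hr.
have hPX := coef_in_ideal hP.
pose h := g - v%:P * f * rdivp g F.
have hIh : I h by apply: idealB => //; apply: idealMr => //; apply: idealMl.
have eh : h = rmodp g F + (F - v%:P * f) * rdivp g F.
  by rewrite /h {1}(rdivp_eq monF g); ring.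
have [|m hm] := deg_mod_exists hP (p := h).
  move=> hPh; apply: hr; have -> : rmodp g F = h - (F - v%:P * f) * rdivp g F by rewrite eh addrK.
  exact: idealB hPX hPh (idealMr _ hPX hFf).
have /hmin : exists f, I f /\ deg_mod P f m by exists h.
suff : (m <= n - 1)%N by lia.
apply: deg_mod_le hm _ => i hi; rewrite eh coefD nth_default ?add0r.
  exact: (idealMr _ hPX hFf).
have := ltn_rmodpN0 g (monic_neq0 monF); rewrite hsF; move: (size _) => s hs; lia.
Qed.

End MonicGenerator.

Section LocalStep.
Variables (R : comNzRingType) (I : {poly R} -> Prop) (P : R -> Prop) (s : R).
Hypotheses (hI : is_ideal I) (hP : is_ideal P) (hPres : residue_field P).
Hypotheses (hs : ~ P s) (hsP : forall x, P x -> I (s * x)%:P) (hIP : forall x, I x%:P -> P x).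

(* I contains no polynomial reducing modulo P to a nonzero constant u: with
   1 - u v ∈ P we would get s ∈ I ∩ R ⊆ P. *)
Lemma constant_residues_in g : I g -> (forall i, (0 < i)%N -> P g`_i) -> P g`_0.
Proof.
move=> hg hgi; apply: NNPP => /hPres[v hv].
apply: hs; apply: hIP.
have -> : s%:P = s%:P * (1 - v%:P * g) + s%:P * v%:P * g by ring.
apply: (idealD hI _ (idealMl _ hI hg)).
apply: (coef_in_poly_ideal (Q := fun y => I y%:P) hI) => // i; rewrite coefCM; apply: hsP.
rewrite coefB coefC coefCM; case: i => [|i] /=; first by rewrite mulrC.
by rewrite sub0r; apply: idealN => //; apply: idealMl => //; apply: hgi.
Qed.

Lemma contracted_power_local t c : ideal_pow I t c%:P -> ideal_pow P t c.
Proof.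
move=> hc; have [F [monF hF hIF]] := monic_generator hI hP hPres constant_residues_in.
exact: mod_pow_coefC hF (ideal_pow_mod_pow_coef monF hIF hc).
Qed.

End LocalStep.

Section LocalToGlobal.
Variable S : comNzRingType.
Implicit Types (J K P Q : S -> Prop) (s x : S).

Lemma prime_notin_expr P s n : is_prime_ideal P -> ~ P s -> ~ P (s ^+ n).
Proof.
move=> [_ hP1 hPp] hs; elim: n => [|n IH]; first by rewrite expr0.
by rewrite exprS => /hPp[].
Qed.

Lemma ideal_pow_scale P J s : is_ideal J -> (forall x, P x -> J (s * x)) ->
  forall n y, ideal_pow P n y -> ideal_pow J n (s ^+ n * y).
Proof.
move=> hJ hs; elim=> [|n IH] y //= [l [hl ->]].
exists [seq (s ^+ n * p.1, s * p.2) | p <- l]; split.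
  by move=> _ /mapP[p /hl[h1 h2] ->] /=; split; [exact: IH | exact: hs].
by rewrite big_map mulr_sumr; apply: eq_bigr => p _ /=; rewrite exprSr mulrACA.
Qed.

(* Prime avoidance among maximal ideals: some s ∉ P multiplies P into every
   member of L (take s in each member of L not contained in P). *)
Lemma prime_avoid P (L : seq (S -> Prop)) : is_prime_ideal P ->
  (forall Q, List.In Q L -> is_prime_ideal Q /\ residue_field Q) ->
  exists s, ~ P s /\ forall x, P x -> forall Q, List.In Q L -> Q (s * x).
Proof.
move=> hP; have [hPi hP1 hPp] := hP.
elim: L => [|Q L IH] hL; first by exists 1.
have [s [hs hsx]] := IH (fun Q' h => hL Q' (or_intror h)).
have [[hQi _ _] hQres] := hL Q (or_introl erefl).
case: (classic (exists y, Q y /\ ~ P y)) => [[y [hy hny]]|hno].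
  exists (s * y); split; first by move/hPp => [].
  move=> x hx Q' [<-|hQ']; rewrite mulrAC; first exact: idealMl.
  have [[hQ'i _ _] _] := hL Q' (or_intror hQ').
  exact: idealMr _ hQ'i (hsx _ hx _ hQ').
(* Otherwise Q ⊆ P, and maximality of Q forces P ⊆ Q. *)
exists s; split=> // x hx Q' [<-|hQ']; last exact: hsx.
apply: idealMl => //; apply: NNPP => /hQres[v hv]; apply: hP1.
have hQP y : Q y -> P y by move=> hy; apply: NNPP => hny; apply: hno; exists y.
rewrite -(subrK (x * v) 1); exact: idealD hPi (hQP _ hv) (idealMr _ hPi hx).
Qed.

Lemma one_sub_expr K k n : is_ideal K -> K k -> exists k', K k' /\ (1 - k) ^+ n = 1 - k'.
Proof.
move=> hK hk; elim: n => [|n [k' [hk' e]]].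
  by exists 0; split; [exact: ideal0 | rewrite expr0 subr0].
exists (k' + (1 - k') * k); split; first by apply: idealD => //; apply: idealMl.
by rewrite exprSr e mulrBr mulr1 opprD addrA.
Qed.

Lemma comaximal_list K (L : seq (S -> Prop)) : is_ideal K ->
  (forall Q, List.In Q L -> is_ideal Q /\ exists s, K s /\ Q (1 - s)) ->
  exists k, K k /\ forall Q, List.In Q L -> Q (1 - k).
Proof.
move=> hK; elim: L => [|Q L IH] hL; first by exists 0; split=> //; exact: ideal0.
have [k [hk hkL]] := IH (fun Q' h => hL Q' (or_intror h)).
have [hQi [s [hs hQs]]] := hL Q (or_introl erefl).
exists (k + (1 - k) * s); split; first by apply: idealD => //; apply: idealMl.
have -> : 1 - (k + (1 - k) * s) = (1 - k) * (1 - s) by ring.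
move=> Q' [<-|hQ']; first exact: idealMl.
exact: idealMr _ (proj1 (hL Q' (or_intror hQ'))) (hkL _ hQ').
Qed.

(* The ideal
   K = {s | s c ∈ J^t} contains k with 1 - k ∈ J, hence c ∈ J^t. *)
Lemma prime_decomposition_local_global J L t c :
  is_ideal J -> prime_decomposition J L -> (forall P, List.In P L -> residue_field P) ->
  (forall P, List.In P L -> exists s, ~ P s /\ ideal_pow J t (s * c)) ->
  ideal_pow J t c.
Proof.
move=> hJ [hLp hLJ] hLres hloc.
pose K s := ideal_pow J t (s * c).
have hJt := ideal_pow_ideal J t.
have hK : is_ideal K.
  split; rewrite /K.
  - by rewrite mul0r; exact: ideal0.
  - by move=> x y hx hy; rewrite mulrDl; exact: idealD.
  - by move=> r x hx; rewrite -mulrA; exact: idealMl.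
have [k [hk hkL]] : exists k, K k /\ forall P, List.In P L -> P (1 - k).
  apply: comaximal_list => // P hP; have [[hPi _ _] [s [hs hKs]]] := (hLp P hP, hloc P hP).
  have [v hv] := hLres P hP s hs.
  by split=> //; exists (s * v); split=> //; rewrite /K mulrAC; apply: idealMr.
have [k' [hk' e]] := one_sub_expr t hK hk.
have hK1 : K (1 - k').
  by rewrite /K -e; apply: idealMr hJt _; apply/ideal_pow_expr/(proj2 (hLJ _)).
by have := idealD hK hK1 hk'; rewrite subrK /K mul1r.
Qed.

End LocalToGlobal.

Section Contraction.
Variables (R : comNzRingType) (I : {poly R} -> Prop).

Lemma contract_radical : is_radical I -> is_radical (contract I).
Proof.
move=> [hI hIr]; split; last by move=> f n; rewrite /contract polyC_exp; apply: hIr.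
split; rewrite /contract.
- by rewrite polyC0; exact: ideal0.
- by move=> x y hx hy; rewrite polyCD; exact: idealD.
- by move=> r x hx; rewrite polyCM; exact: idealMl.
Qed.

Lemma contract_pow t c : ideal_pow (contract I) t c -> ideal_pow I t c%:P.
Proof.
elim: t c => [|t IH] c //= [l [hl ->]].
exists [seq (p.1%:P, p.2%:P) | p <- l]; split.
  by move=> _ /mapP[p /hl[h1 h2] ->]; split; [exact: IH | exact: h2].
by rewrite big_map rmorph_sum; apply: eq_bigr => p _ /=; rewrite polyCM.
Qed.

End Contraction.

Theorem theorem3p11 (R : idomainType) :
  noetherian R -> krull_dim_eq R 1 ->
  forall I : {poly R} -> Prop, is_radical I -> power_stable I.
Proof.
move=> hN hK I hIrad t ht c; split; last exact: contract_pow.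
move=> hc; have hI := proj1 hIrad; have [hJ hJr] := contract_radical hIrad.
have hJc : contract I c by apply: ideal_pow_subr hI ht hc.
case: (classic (exists x0, contract I x0 /\ x0 != 0)) => [[x0 [hx0 hx0n]]|hJ0]; last first.
  have -> : c = 0 by apply: NNPP => /eqP hc0; apply: hJ0; exists c.
  exact: ideal0 (ideal_pow_ideal _ _).
have [L [hLp hLJ]] := radical_prime_decomposition hN (conj hJ hJr).
have hLres P (hP : List.In P L) : residue_field P :=
  nonzero_prime_residue_field hN hK (hLp P hP) (proj1 (hLJ x0) hx0 P hP) hx0n.
apply: (prime_decomposition_local_global hJ (conj hLp hLJ) hLres) => P hP.
have [s [hs hsP]] := prime_avoid (hLp P hP) (fun Q hQ => conj (hLp Q hQ) (hLres Q hQ)).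
have hsJ x : P x -> contract I (s * x) by move=> hx; apply/hLJ => Q; apply: hsP.
exists (s ^+ t); split; first exact: prime_notin_expr (hLp P hP) hs.
apply: (ideal_pow_scale hJ hsJ).
have [hPi _ _] := hLp P hP.
by apply: (contracted_power_local hI hPi (hLres P hP) hs hsJ) hc => x /hLJ; apply.
Qed.
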